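(* Consider the following fully discrete moment scheme for the one-dimensional Boltzmann–BGK equation. Fix $M\ge 3$ and $N>M$, an interval $[\xi_{\min},\xi_{\max}]$, the $N$-point Gauss–Legendre nodes $\xi_1,\dots,\xi_N$ and weights $\omega_1,\dots,\omega_N>0$ on it, $A\in\mathbb R^{M\times N}$ with $A_{mi}=\xi_i^{m-1}$, $A_{\mathrm{cons}}\in\mathbb R^{3\times N}$ the first three rows of $A$, $L=\operatorname{diag}(\omega_i)$, $\Xi=\operatorname{diag}(\xi_i)$, $|\Xi|=\operatorname{diag}(|\xi_i|)$, and $R=\{ALz: z\in\mathbb R^N,\ z>0\}$. The spatial domain $[x_{\min},x_{\max}]$ is divided into $N_x$ uniform cells $\mathcal I_i$ of width $\Delta x$, time steps have size $\Delta t$, and $\Lambda:=\Delta t/\Delta x$. Given positive initial data $f_0(x,\xi)$ and positive inflow boundary data $f_{in}(x,t,\xi)$, the moment vectors $u_i^k\in\mathbb R^M$ are initialized by $u_i^1=\frac1{\Delta x}\int_{\mathcal I_i}\sum_{j}\omega_j(1,\xi_j,\dots,\xi_j^{M-1})^T f_0(x,\xi_j)\,dx$ and for $k=1,2,\dots$ updated by: (1) (entropy minimization) $W_{\mathcal M,i}^k\in\mathbb R^N_{>0}$ minimizes $\sum_j w_j\log(w_j)\omega_j$ over $w\in\mathbb R^N_{>0}$ subject to $A_{\mathrm{cons}}Lw$ being equal to the first three entries of $u_i^k$; (2) (collision) $u_i^{k^*}=\frac{1}{1+\Delta t/\tau_i}u_i^k+\frac{\Delta t/\tau_i}{1+\Delta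 t/\tau_i}ALW_{\mathcal M,i}^k$ with relaxation times $\tau_i>0$; (3) (optimization) $W_i^{k^*}$ solves $\min_{W\in\mathbb R^N}\frac12\|W\|_{l^2}^2$ subject to $ALW=u_i^{k^*}$, $W>0$; (4) (transport) $u_i^{k+1}=u_i^{k^*}-\Lambda\big(\mathcal F(W_{i+1}^{k^*},W_i^{k^*})-\mathcal F(W_i^{k^*},W_{i-1}^{k^*})\big)$, where $\mathcal F(W_1,W_2)=\frac12\big(AL(\Xi-|\Xi|)W_1+AL(\Xi+|\Xi|)W_2\big)$ and the ghost values $W_0^{k^*}$, $W_{N_x+1}^{k^*}$ are the vectors of values $(f_{in}(x,t_k,\xi_j))_j$ at $x=x_{\min}$ and $x=x_{\max}$ respectively. Assume that for all $x$ and $t$ the vectors $\sum_j\omega_j(1,\xi_j,\dots,\xi_j^{M-1})^T f_{in}(x,t,\xi_j)$ and $\sum_j\omega_j(1,\xi_j,\dots,\xi_j^{M-1})^T f_0(x,\xi_j)$ belong to $R$. Then the quadratic optimization problem in step (3) is feasible (at every time step and in every cell) if $\Lambda\in\big(0,\min\{|\xi_{\max}^{-1}|,|\xi_{\min}^{-1}|\}\big]$.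
   Context: Vector inequalities $z>0$, $W>0$ are componentwise; $\mathbb R^N_{>0}$ denotes vectors with all entries positive. The scheme is a finite-volume/method-of-moments discretization in which moments are computed by the Gauss–Legendre quadrature on the truncated velocity interval $[\xi_{\min},\xi_{\max}]$, and the optimization problem in step (3) is called feasible if its constraint set is nonempty. *)

From HB Require Import structures.
From mathcomp Require Import all_boot all_order all_algebra.
From mathcomp Require Import all_classical all_reals all_analysis.
Set Implicit Arguments.
Unset Strict Implicit.
Unset Printing Implicit Defensive.
Import Order.TTheory GRing.Theory Num.Theory.
Import numFieldNormedType.Exports.

Local Open Scope classical_set_scope.
Local Open Scope ring_scope.

Section BGKDefs.
Context {R : realType}.

(* These properties
   determine the Gauss--Legendre nodes and weights uniquely. *)
Definition GaussLegendre (a b : R) (N : nat) (xi w : 'I_N -> R) : Prop :=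
  [/\ a < b,
      (forall i j : 'I_N, (i < j)%N -> xi i < xi j),
      (forall i, a <= xi i <= b),
      (forall i, 0 < w i) &
      (forall m : nat, (m < 2 * N)%N ->
         \sum_(i < N) w i * xi i ^+ m = (b ^+ m.+1 - a ^+ m.+1) / m.+1%:R)].

(* A in R^{M x N}, A_{mi} = xi_i^{m-1}  (0-based: xi_i^m) *)
Definition momA (M N : nat) (xi : 'I_N -> R) : 'M[R]_(M, N) :=
  \matrix_(m < M, i < N) xi i ^+ m.

Definition Acons (N : nat) (xi : 'I_N -> R) : 'M[R]_(3, N) := momA 3 xi.

Definition Lmat (N : nat) (w : 'I_N -> R) : 'M[R]_N := diag_mx (\row_i w i).
Definition Ximat (N : nat) (xi : 'I_N -> R) : 'M[R]_N := diag_mx (\row_i xi i).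
Definition absXimat (N : nat) (xi : 'I_N -> R) : 'M[R]_N :=
  diag_mx (\row_i `|xi i|).

Definition posv (N : nat) (z : 'cV[R]_N) : Prop := forall i, 0 < z i 0.

Definition Rset (M N : nat) (xi w : 'I_N -> R) : set 'cV[R]_M :=
  [set u | exists z : 'cV[R]_N, posv z /\ u = momA M xi *m Lmat w *m z].

Definition sample (N : nat) (xi : 'I_N -> R) (g : R -> R) : 'cV[R]_N :=
  \col_(j < N) g (xi j).

Definition first3 (M : nat) (u : 'cV[R]_M) : 'cV[R]_3 :=
  \col_(m < 3) (if insub (val m) is Some m' then u m' 0 else 0).

Definition entropy (N : nat) (w : 'I_N -> R) (W : 'cV[R]_N) : R :=
  \sum_(j < N) W j 0 * ln (W j 0) * w j.

Definition is_entropy_min (M N : nat) (xi w : 'I_N -> R) (u : 'cV[R]_M)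
    (W : 'cV[R]_N) : Prop :=
  [/\ posv W, Acons xi *m Lmat w *m W = first3 u &
      forall W' : 'cV[R]_N, posv W' -> Acons xi *m Lmat w *m W' = first3 u ->
        entropy w W <= entropy w W'].

Definition qp_constr (M N : nat) (xi w : 'I_N -> R) (u : 'cV[R]_M)
    (W : 'cV[R]_N) : Prop :=
  momA M xi *m Lmat w *m W = u /\ posv W.

Definition qp_feasible (M N : nat) (xi w : 'I_N -> R) (u : 'cV[R]_M) : Prop :=
  exists W : 'cV[R]_N, qp_constr xi w u W.

Definition half_sqnorm (N : nat) (W : 'cV[R]_N) : R :=
  2^-1 * \sum_(j < N) W j 0 ^+ 2.

Definition qp_sol (M N : nat) (xi w : 'I_N -> R) (u : 'cV[R]_M)
    (W : 'cV[R]_N) : Prop :=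
  qp_constr xi w u W /\
  forall W' : 'cV[R]_N, qp_constr xi w u W' -> half_sqnorm W <= half_sqnorm W'.

Definition flux (M N : nat) (xi w : 'I_N -> R) (W1 W2 : 'cV[R]_N) : 'cV[R]_M :=
  2^-1 *: (momA M xi *m Lmat w *m ((Ximat xi - absXimat xi) *m W1)
          + momA M xi *m Lmat w *m ((Ximat xi + absXimat xi) *m W2)).

(* cell I_i = [xmin + (i-1) dx, xmin + i dx], i = 1..Nx *)
Definition cell (xmin dx : R) (i : nat) : set R :=
  `[xmin + (i.-1)%:R * dx, xmin + i%:R * dx]%classic.

Definition ghostW (N Nx : nat) (xi : 'I_N -> R) (fin : R -> R -> R -> R)
    (xmin xmax t : R) (W : nat -> 'cV[R]_N) (i : nat) : 'cV[R]_N :=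
  if i == 0%N then sample xi (fin xmin t)
  else if i == Nx.+1 then sample xi (fin xmax t)
  else W i.

End BGKDefs.

Arguments momA {R} M {N} xi.
Arguments Rset {R} M {N} xi w.
Arguments flux {R} M {N} xi w W1 W2.

From HB Require Import structures.
From mathcomp Require Import all_boot all_order all_algebra.
From mathcomp Require Import all_classical all_reals all_analysis.
From mathcomp Require Import lra.
Set Implicit Arguments.
Unset Strict Implicit.
Unset Printing Implicit Defensive.
Import Order.TTheory GRing.Theory Num.Theory.
Import numFieldNormedType.Exports.
Local Open Scope classical_set_scope.
Local Open Scope ring_scope.

(* The realizability set R = {A L z : z > 0} is a convex cone, and each stage
   of the scheme writes the new moment vector as A L z with z > 0:
   - cell averages of a positive density have strictly positive quadrature
     weights z_j = (1/dx) \int f0(x, xi_j) dx;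
   - the collision step is a combination of u in R and A L W_M with positive
     and nonnegative coefficients;
   - the upwind transport step acts on the nodal values as
     W_i - lam xi_j^+ (W_i - W_(i-1)) - lam xi_j^- (W_(i+1) - W_i), a convex
     combination of positive values when lam |xi_j| <= 1, which is exactly
     the CFL bound since every node lies in [ximin, ximax].
   Hence u_i^{K*} = A L z with z > 0, and z is feasible for step (3). *)

Section Rintegral_lemmas.
Context d (T : measurableType d) (R : realType).
Variables (mu : {measure set T -> \bar R}) (D : set T).
Hypothesis mD : measurable D.

Lemma Rintegral_sum (I : Type) (s : seq I) (f : I -> T -> R) :
  (forall i, mu.-integrable D (EFin \o f i)) ->
  \int[mu]_(x in D) (\sum_(i <- s) f i x) =
  \sum_(i <- s) \int[mu]_(x in D) f i x.
Proof.
move=> intf; rewrite /Rintegral.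
under eq_integral => x _ do rewrite -sumEFin.
rewrite integral_sum // -EFin_sum_fine // => i _.
by have := integrable_fin_num mD (intf i).
Qed.

Lemma Rintegral_gt0 (f : T -> R) : (0 < mu D)%E ->
  mu.-integrable D (EFin \o f) -> (forall x, D x -> 0 < f x) ->
  0 < \int[mu]_(x in D) f x.
Proof.
move=> muD0 intf fpos; rewrite lt_neqAle Rintegral_ge0 => [|x /fpos/ltW //].
rewrite andbT; apply/negP => /eqP If0.
have Iabs0 : (\int[mu]_(x in D) `|(f x)%:E| = 0)%E.
  transitivity (\int[mu]_(x in D) (f x)%:E)%E.
    apply: eq_integral => x /[!inE] Dx.
    by rewrite gee0_abs // lee_fin ltW // fpos.
  by rewrite -(fineK (integrable_fin_num mD intf)) -/(Rintegral mu D f) -If0.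
have [|N [mN N0 DfN]] := (ae_eq_integral_abs mu mD _).1 Iabs0.
  by case/integrableP: intf.
have muDN : (mu D <= mu N)%E.
  apply: le_measure; rewrite ?inE // => x Dx; apply: DfN => /(_ Dx) [] fx0.
  by have := fpos x Dx; rewrite fx0 ltxx.
by have := lt_le_trans muD0 muDN; rewrite N0 ltxx.
Qed.

End Rintegral_lemmas.

Section realizability.
Variables (R : realType) (M N : nat) (xi w : 'I_N -> R).

Local Notation AL := (momA M xi *m Lmat w).

Lemma momA_Lmat_mulmx_coef (z : 'cV[R]_N) m :
  (AL *m z) m 0 = \sum_j xi j ^+ m * w j * z j 0.
Proof. by rewrite mxE; apply: eq_bigr => j _; rewrite mul_mx_diag !mxE. Qed.

Lemma Rset_lincomb (a b : R) (u : 'cV[R]_M) (V : 'cV[R]_N) :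
  0 < a -> 0 <= b -> Rset M xi w u -> (forall j, 0 <= V j 0) ->
  Rset M xi w (a *: u + b *: (AL *m V)).
Proof.
move=> a_gt0 b_ge0 [z [z_gt0 ->]] V_ge0; exists (a *: z + b *: V); split.
  by move=> j; rewrite !mxE ltr_pwDl ?mulr_ge0 ?mulr_gt0.
by rewrite mulmxDr !scalemxAr.
Qed.

Lemma relaxation_Rset (h : R) (u : 'cV[R]_M) (V : 'cV[R]_N) :
  0 <= h -> Rset M xi w u -> posv V ->
  Rset M xi w ((1 + h)^-1 *: u + (h / (1 + h)) *: (AL *m V)).
Proof.
move=> h_ge0 u_Rset V_gt0; have h1_gt0 : 0 < 1 + h by rewrite ltr_pwDl.
apply: Rset_lincomb => //.
- by rewrite invr_gt0.
- by rewrite divr_ge0 // ltW.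
- by move=> j; rewrite ltW.
Qed.

Lemma upwind_coef_gt0 (lam x p a m : R) :
  0 <= lam -> lam * `|x| <= 1 -> 0 < p -> 0 < a -> 0 < m ->
  0 < a - lam * (2^-1 * ((x - `|x|) * p + (x + `|x|) * a
                         - ((x - `|x|) * a + (x + `|x|) * m))).
Proof.
move=> lam_ge0 cfl p_gt0 a_gt0 m_gt0.
have [x_ge0|x_lt0] := leP 0 x.
  rewrite ger0_norm // in cfl *.
  have : 0 <= lam * x by rewrite mulr_ge0.
  nra.
rewrite ltr0_norm // in cfl *.
have : 0 <= lam * - x by rewrite mulr_ge0 // oppr_ge0 ltW.
nra.
Qed.

Lemma flux_update_Rset (lam : R) (Wl Wc Wr : 'cV[R]_N) :
  0 <= lam -> (forall j, lam * `|xi j| <= 1) ->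
  posv Wl -> posv Wc -> posv Wr ->
  Rset M xi w (AL *m Wc - lam *: (flux M xi w Wr Wc - flux M xi w Wc Wl)).
Proof.
move=> lam_ge0 cfl Wl_gt0 Wc_gt0 Wr_gt0.
set Dm := Ximat xi - absXimat xi; set Dp := Ximat xi + absXimat xi.
exists (Wc - lam *: (2^-1 *: (Dm *m Wr + Dp *m Wc - (Dm *m Wc + Dp *m Wl)))).
split; last first.
  by rewrite /flux -/Dm -/Dp mulmxBr -!scalemxAr mulmxBr !mulmxDr !scalerBr.
move=> j; rewrite /Dm /Dp !mulmxBl !mulmxDl /Ximat /absXimat !mul_diag_mx !mxE.
by have := upwind_coef_gt0 lam_ge0 (cfl j) (Wr_gt0 j) (Wc_gt0 j) (Wl_gt0 j);
  rewrite !mulrBl !mulrDl.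
Qed.

End realizability.

Section moments_of_densities.
Context d (T : measurableType d) (R : realType).
Variables (mu : {measure set T -> \bar R}) (D : set T).
Hypotheses (mD : measurable D) (muD_gt0 : (0 < mu D)%E).

Lemma integral_moments_Rset (M N : nat) (xi w : 'I_N -> R) (g : 'I_N -> T -> R)
    (c : R) :
  0 < c -> (forall j, mu.-integrable D (EFin \o g j)) ->
  (forall j x, D x -> 0 < g j x) ->
  Rset M xi w (c *: \col_(m < M)
                 \int[mu]_(x in D) \sum_(j < N) w j * xi j ^+ m * g j x).
Proof.
move=> c_gt0 intg g_gt0.
exists (\col_j (c * \int[mu]_(x in D) g j x)); split.
  by move=> j; rewrite mxE mulr_gt0 // Rintegral_gt0 // => x; exact: g_gt0.
apply/matrixP => m k; rewrite ord1 momA_Lmat_mulmx_coef !mxE Rintegral_sum //.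
  rewrite mulr_sumr; apply: eq_bigr => j _.
  by rewrite mxE RintegralZl // mulrCA [w j * _]mulrC.
by move=> j; apply: eq_integrable (integrableZl mD (w j * xi j ^+ m) (intg j)).
Qed.

End moments_of_densities.

Lemma cfl_norm_le1 (R : realType) (lam a b x : R) :
  0 <= lam -> lam <= Num.min `|b^-1| `|a^-1| -> a <= x <= b -> lam * `|x| <= 1.
Proof.
have norm_le1 c : 0 <= lam -> lam <= `|c^-1| -> `|x| <= `|c| -> lam * `|x| <= 1.
  move=> lam_ge0 lam_le xc; have [c0|c_neq0] := eqVneq c 0.
    by move: xc; rewrite c0 normr0 normr_le0 => /eqP ->; rewrite normr0 mulr0.
  apply: le_trans (_ : `|c^-1| * `|c| <= 1); first exact: ler_pM.
  by rewrite normfV mulVf ?normr_eq0.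
rewrite le_min => lam_ge0 /andP[lam_b lam_a] /andP[ax xb].
have [x_ge0|x_lt0] := leP 0 x.
  by apply: (norm_le1 b); rewrite // !ger0_norm ?(le_trans x_ge0).
by apply: (norm_le1 a); rewrite // !ltr0_norm ?lerN2 ?(le_lt_trans ax).
Qed.

Section cells.
Variables (R : realType) (xmin dx : R) (i : nat).
Hypotheses (dx_gt0 : 0 < dx) (i_gt0 : (0 < i)%N).

Lemma cell_measure_gt0 : (0 < (@lebesgue_measure R) (cell xmin dx i))%E.
Proof.
rewrite /cell lebesgue_measure_itv /= lte_fin ltrD2l ltr_pM2r // ltr_nat.
by rewrite prednK // leqnn /= lte_fin subr_gt0 ltrD2l ltr_pM2r // ltr_nat prednK.
Qed.

Lemma cell_sub_itv (Nx : nat) : (i <= Nx)%N ->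
  cell xmin dx i `<=` `[xmin, xmin + Nx%:R * dx].
Proof.
move=> i_le x; rewrite /cell /= !in_itv /= => /andP[lo_x x_hi]; apply/andP; split.
  by rewrite (le_trans _ lo_x) // lerDl mulr_ge0 // ltW.
by rewrite (le_trans x_hi) // lerD2l ler_pM2r // ler_nat.
Qed.

Lemma cell_average_Rset (Nx M N : nat) (xi w : 'I_N -> R) (f0 : R -> R -> R) :
  (i <= Nx)%N ->
  (forall j, (@lebesgue_measure R).-integrable `[xmin, xmin + Nx%:R * dx]
               (fun x => (f0 x (xi j))%:E)) ->
  (forall j x, xmin <= x <= xmin + Nx%:R * dx -> 0 < f0 x (xi j)) ->
  Rset M xi w (dx^-1 *: \col_(m < M) \int[lebesgue_measure]_(x in cell xmin dx i)
                 \sum_(j < N) w j * xi j ^+ m * f0 x (xi j)).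
Proof.
move=> i_le f0_int f0_gt0; have cell_sub := cell_sub_itv i_le.
apply: integral_moments_Rset; rewrite ?invr_gt0 //.
- exact: measurable_itv.
- exact: cell_measure_gt0.
- move=> j; apply: integrableS (f0_int j) => //; exact: measurable_itv.
- by move=> j x /cell_sub; rewrite /= in_itv; apply: f0_gt0.
Qed.

End cells.

Section ghost_cells.
Variables (R : realType) (N Nx : nat) (xi : 'I_N -> R) (fin : R -> R -> R -> R).
Variables (xmin xmax t : R) (W : nat -> 'cV[R]_N).

Lemma ghostW_inner i : (1 <= i <= Nx)%N -> ghostW Nx xi fin xmin xmax t W i = W i.
Proof. by case/andP=> i_gt0 i_le; rewrite /ghostW gtn_eqF // ltn_eqF. Qed.

Lemma ghostW_pos i :
  posv (sample xi (fin xmin t)) -> posv (sample xi (fin xmax t)) ->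
  (forall j, (1 <= j <= Nx)%N -> posv (W j)) -> (i <= Nx.+1)%N ->
  posv (ghostW Nx xi fin xmin xmax t W i).
Proof.
move=> left_gt0 right_gt0 W_gt0 i_le; rewrite /ghostW.
case: eqP => [//|/eqP i_neq0]; case: eqP => [//|/eqP i_neq].
by apply: W_gt0; rewrite lt0n i_neq0 -ltnS ltn_neqAle i_neq.
Qed.

Lemma ghost_flux_update_Rset (M : nat) (w : 'I_N -> R) (lam : R) i :
  0 <= lam -> (forall j, lam * `|xi j| <= 1) ->
  posv (sample xi (fin xmin t)) -> posv (sample xi (fin xmax t)) ->
  (forall j, (1 <= j <= Nx)%N -> posv (W j)) -> (1 <= i <= Nx)%N ->
  let G := ghostW Nx xi fin xmin xmax t W in
  Rset M xi w (momA M xi *m Lmat w *m W i -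
    lam *: (flux M xi w (G i.+1) (G i) - flux M xi w (G i) (G i.-1))).
Proof.
move=> lam_ge0 cfl left_gt0 right_gt0 W_gt0 /[dup] i_rng /andP[i_gt0 i_le] G.
rewrite -{1}(ghostW_inner i_rng); apply: flux_update_Rset => //;
  apply: ghostW_pos => //; rewrite ?leqW // (leq_trans (leq_pred i)) ?leqW //.
Qed.

End ghost_cells.

Theorem lemma3p1 (R : realType) (M N : nat) (ximin ximax : R)
    (xi w : 'I_N -> R) (xmin xmax : R) (Nx : nat) (dt : R)
    (tau : nat -> R) (f0 : R -> R -> R) (fin : R -> R -> R -> R)
    (u : nat -> nat -> 'cV[R]_M) (WM : nat -> nat -> 'cV[R]_N)
    (us : nat -> nat -> 'cV[R]_M) (W : nat -> nat -> 'cV[R]_N) (K : nat) :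
  (3 <= M)%N -> (M < N)%N ->
  GaussLegendre ximin ximax xi w ->
  xmin < xmax -> (0 < Nx)%N -> 0 < dt ->
  (forall i, (1 <= i <= Nx)%N -> 0 < tau i) ->
  (forall x v, xmin <= x <= xmax -> ximin <= v <= ximax -> 0 < f0 x v) ->
  (forall x t v, xmin <= x <= xmax -> ximin <= v <= ximax -> 0 < fin x t v) ->
  (forall x t, xmin <= x <= xmax ->
     Rset M xi w (momA M xi *m Lmat w *m sample xi (fin x t))) ->
  (forall x, xmin <= x <= xmax ->
     Rset M xi w (momA M xi *m Lmat w *m sample xi (f0 x))) ->
  (forall j : 'I_N, (@lebesgue_measure R).-integrable `[xmin, xmax]
       (fun x => (f0 x (xi j))%:E)) ->
  (* step (0): initialization *)
  (forall i, (1 <= i <= Nx)%N ->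
     u 1%N i = ((xmax - xmin) / Nx%:R)^-1 *:
       \col_(m < M) Rintegral (@lebesgue_measure R)
          (cell xmin ((xmax - xmin) / Nx%:R) i)
          (fun x => \sum_(j < N) w j * xi j ^+ m * f0 x (xi j))) ->
  (* step (1): entropy minimization, for k = 1..K *)
  (forall k i, (1 <= k <= K)%N -> (1 <= i <= Nx)%N ->
     is_entropy_min xi w (u k i) (WM k i)) ->
  (* step (2): collision, for k = 1..K *)
  (forall k i, (1 <= k <= K)%N -> (1 <= i <= Nx)%N ->
     us k i = (1 + dt / tau i)^-1 *: u k i
              + ((dt / tau i) / (1 + dt / tau i)) *:
                  (momA M xi *m Lmat w *m WM k i)) ->
  (* step (3): W_i^{k*} solves the QP, for the earlier steps k = 1..K-1 *)
  (forall k i, (1 <= k < K)%N -> (1 <= i <= Nx)%N ->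
     qp_sol xi w (us k i) (W k i)) ->
  (* step (4): transport, for k = 1..K-1, t_k = (k-1) dt *)
  (forall k i, (1 <= k < K)%N -> (1 <= i <= Nx)%N ->
     u k.+1 i = us k i - (dt / ((xmax - xmin) / Nx%:R)) *:
       (flux M xi w
          (ghostW Nx xi fin xmin xmax ((k.-1)%:R * dt) (W k) i.+1)
          (ghostW Nx xi fin xmin xmax ((k.-1)%:R * dt) (W k) i)
        - flux M xi w
          (ghostW Nx xi fin xmin xmax ((k.-1)%:R * dt) (W k) i)
          (ghostW Nx xi fin xmin xmax ((k.-1)%:R * dt) (W k) i.-1))) ->
  (* CFL condition Lambda in (0, min{|ximax^-1|, |ximin^-1|}] *)
  0 < dt / ((xmax - xmin) / Nx%:R) ->
  dt / ((xmax - xmin) / Nx%:R) <= Num.min `|ximax^-1| `|ximin^-1| ->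
  (1 <= K)%N ->
  forall i, (1 <= i <= Nx)%N -> qp_feasible xi w (us K i).
Proof.
move=> _ _ [_ _ xi_rng _ _] xmin_lt Nx_gt0 dt_gt0 tau_gt0 f0_gt0 fin_gt0 _ _ f0_int
  init entmin collision qp transport lam_gt0 lam_le K_gt0 i i_rng.
set dx := (xmax - xmin) / Nx%:R in init transport lam_gt0 lam_le.
set lam := dt / dx in transport lam_gt0 lam_le.
have dx_gt0 : 0 < dx by rewrite divr_gt0 ?subr_gt0 ?ltr0n.
have xmax_eq : xmin + Nx%:R * dx = xmax.
  by rewrite /dx mulrCA divff ?mulr1 ?pnatr_eq0 -?lt0n // addrC subrK.
have cfl j : lam * `|xi j| <= 1 := cfl_norm_le1 (ltW lam_gt0) lam_le (xi_rng j).
have sample_gt0 x t : xmin <= x <= xmax -> posv (sample xi (fin x t)).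
  by move=> x_rng j; rewrite mxE fin_gt0.
have uK_Rset : Rset M xi w (u K i).
  case: K K_gt0 entmin collision qp transport
    => [//|[_ _ _ _ _|k _ _ _ qp transport]].
    rewrite init //; case/andP: i_rng => i_gt0 i_le.
    apply: (cell_average_Rset dx_gt0 i_gt0 M w i_le); rewrite xmax_eq //.
    by move=> j x x_rng; exact: f0_gt0 x_rng (xi_rng j).
  have k_rng : (1 <= k.+1 < k.+2)%N by rewrite ltnSn.
  have [[us_eq _] _] := qp _ _ k_rng i_rng.
  rewrite transport // -us_eq; apply: ghost_flux_update_Rset => //.
  - exact: ltW.
  - by apply: sample_gt0; rewrite lexx ltW.
  - by apply: sample_gt0; rewrite lexx ltW.
  - by move=> j j_rng; case: (qp _ _ k_rng j_rng) => -[].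
have K_rng : (1 <= K <= K)%N by rewrite K_gt0 leqnn.
have [z [z_gt0 us_eq]] : Rset M xi w (us K i).
  have [WM_gt0 _ _] := entmin K i K_rng i_rng.
  by rewrite collision //; apply: relaxation_Rset; rewrite // divr_ge0 ?ltW ?tau_gt0.
by exists z.
Qed.
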